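(* Let $k$ be a field and $\mathsf{E}$ a locally finite $k$-linear category. Then the comodule inclusion functor $\Upsilon_\mathsf{E}$ from the category of left $\mathcal{C}_\mathsf{E}$-comodules to the category of left $\mathsf{E}$-modules is exact and fully faithful.
   Context: A small $k$-linear category $\mathsf{E}$ has $k$-vector spaces $\operatorname{Hom}_\mathsf{E}(x,y)$, $k$-bilinear associative composition and identities, with $\mathrm{id}_x\neq0$ for all $x$. A left $\mathsf{E}$-module is a $k$-linear functor $\mathsf{E}\to k\text{-Vect}$; morphisms are natural transformations. Write $x\preceq y$ if there are $n\ge1$ and objects $x=z_0,\dots,z_n=y$ with $\operatorname{Hom}_\mathsf{E}(z_{i-1},z_i)\neq0$ for all $i$. $\mathsf{E}$ is locally finite if all $\operatorname{Hom}_\mathsf{E}(x,y)$ are finite-dimensional and every set $\{z:x\preceq z\preceq y\}$ is finite. $\mathcal{C}_\mathsf{E}=\bigoplus_{x,y}\mathcal{C}^{x,y}$, $\mathcal{C}^{x,y}=\operatorname{Hom}_\mathsf{E}(x,y)^*$; counit zero on $\mathcal{C}^{x,y}$ for $x\ne y$ and evaluation at $\mathrm{id}_x$ on $\mathcal{C}^{x,x}$; comultiplication $\mathcal{C}^{x,y}\to\bigoplus_z\mathcal{C}^{x,z}\otimes\mathcal{C}^{z,y}$ with components dual to composition $g\otimes h\mapsto hg$. For a left $\mathcal{C}_\mathsf{E}$-comodule $(\mathcal{M},\nu)$ and $\varphi\in\mathcal{C}_\mathsf{E}^*$ set $\varphi\cdot m=(\varphi\otimes\mathrm{id})\nu(m)$.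 With $e_x$ the functional equal to evaluation at $\mathrm{id}_x$ on $\mathcal{C}^{x,x}$ and zero elsewhere and $\mathrm{ev}_f$ (for $f\in\operatorname{Hom}_\mathsf{E}(x,y)$) equal to evaluation at $f$ on $\mathcal{C}^{x,y}$ and zero elsewhere, $\Upsilon_\mathsf{E}(\mathcal{M})(x)=e_x\cdot\mathcal{M}$ (and $\mathcal{M}=\bigoplus_xe_x\cdot\mathcal{M}$), $f$ acting by $m\mapsto\mathrm{ev}_f\cdot m$; on morphisms $\Upsilon_\mathsf{E}$ takes restrictions. *)

From HB Require Import structures.
From Stdlib Require List.
From mathcomp Require Import all_boot all_algebra.
Set Implicit Arguments. Unset Strict Implicit. Unset Printing Implicit Defensive.
Import GRing.Theory.
Local Open Scope ring_scope.

Record linCat (k : fieldType) := LinCat {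
  Ob : Type;
  Hom : Ob -> Ob -> lmodType k;
  comp : forall x y z : Ob, Hom y z -> Hom x y -> Hom x z;
  idm : forall x : Ob, Hom x x;
  comp_linl : forall x y z (f : Hom x y) (a : k) (g1 g2 : Hom y z),
      comp (a *: g1 + g2) f = a *: comp g1 f + comp g2 f;
  comp_linr : forall x y z (g : Hom y z) (a : k) (f1 f2 : Hom x y),
      comp g (a *: f1 + f2) = a *: comp g f1 + comp g f2;
  compA : forall w x y z (h : Hom y z) (g : Hom x y) (f : Hom w x),
      comp h (comp g f) = comp (comp h g) f;
  comp1l : forall x y (f : Hom x y), comp (idm y) f = f;
  comp1r : forall x y (f : Hom x y), comp f (idm x) = f;
  idm_neq0 : forall x, idm x != 0
}.
Arguments comp {_ _ _ _ _}.
Arguments idm {_ _}.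
Arguments Hom {k} l.

Section Defs.
Variable k : fieldType.
Variable E : linCat k.

Definition nzHom (x y : Ob E) : Prop := exists f : Hom E x y, f != 0.

Inductive precE (x : Ob E) : Ob E -> Prop :=
  | precE1 y : nzHom x y -> precE x y
  | precES y z : precE x y -> nzHom y z -> precE x z.

Definition findim (V : lmodType k) : Prop :=
  exists s : seq V, forall v : V,
    exists c : 'I_(size s) -> k, v = \sum_(i < size s) c i *: s`_i.

Definition locally_finite : Prop :=
  (forall x y : Ob E, findim (Hom E x y)) /\
  (forall x y : Ob E, exists s : seq (Ob E),
      forall z, precE x z -> precE z y -> List.In z s).

(* Left C_E-comodules, with the coaction nu encoded through its components
   act f m := (ev_f (x) id) nu(m) for f : Hom x y
   (C^{x,y} (x) M = Hom(x,y)^* (x) M ~ Hom_k(Hom(x,y), M) as Hom(x,y) is f.d.). *)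
Record comodule := Comodule {
  cm_car : lmodType k;
  cm_act : forall x y : Ob E, Hom E x y -> cm_car -> cm_car;
  cm_act_linl : forall x y (a : k) (f g : Hom E x y) (m : cm_car),
      cm_act (a *: f + g) m = a *: cm_act f m + cm_act g m;
  cm_act_linr : forall x y (f : Hom E x y) (a : k) (m n : cm_car),
      cm_act f (a *: m + n) = a *: cm_act f m + cm_act f n;
  (* nu(m) lies in the direct sum: finitely many nonzero components *)
  cm_fin : forall m : cm_car, exists s : seq (Ob E * Ob E),
      forall x y (f : Hom E x y), ~ List.In (x, y) s -> cm_act f m = 0;
  (* counit: (eps (x) id) nu = id *)
  cm_counit : forall m : cm_car, exists s : seq (Ob E),
      [/\ List.NoDup s,
          (forall x, ~ List.In x s -> cm_act (idm x) m = 0) &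
          m = \sum_(x <- s) cm_act (idm x) m];
  (* coassociativity (Delta (x) id) nu = (id (x) nu) nu, componentwise *)
  cm_coassoc : forall x y z (f : Hom E x y) (g : Hom E y z) (m : cm_car),
      cm_act g (cm_act f m) = cm_act (comp g f) m;
  cm_coassoc0 : forall a b c d (f : Hom E a b) (g : Hom E c d) (m : cm_car),
      b <> c -> cm_act g (cm_act f m) = 0
}.

Definition comod_mor (M N : comodule) (t : {linear cm_car M -> cm_car N}) : Prop :=
  forall x y (f : Hom E x y) (m : cm_car M), t (cm_act f m) = cm_act f (t m).

Record Emodule := Emod {
  md_car : Ob E -> lmodType k;
  md_act : forall x y : Ob E, Hom E x y -> md_car x -> md_car y;
  md_linl : forall x y (a : k) (f g : Hom E x y) (v : md_car x),
      md_act (a *: f + g) v = a *: md_act f v + md_act g v;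
  md_linr : forall x y (f : Hom E x y) (a : k) (v w : md_car x),
      md_act f (a *: v + w) = a *: md_act f v + md_act f w;
  md_id : forall x (v : md_car x), md_act (idm x) v = v;
  md_comp : forall x y z (f : Hom E x y) (g : Hom E y z) (v : md_car x),
      md_act (comp g f) v = md_act g (md_act f v)
}.

Definition is_nat (F G : Emodule) (eta : forall x, md_car F x -> md_car G x) : Prop :=
  (forall x (a : k) (v w : md_car F x), eta x (a *: v + w) = a *: eta x v + eta x w) /\
  (forall x y (f : Hom E x y) (v : md_car F x), eta y (md_act f v) = md_act f (eta x v)).

End Defs.

Section U.
Variables (k : fieldType) (E : linCat k).
Section UM.
Variable M : comodule E.

Lemma cm_act0r x y (f : Hom E x y) : cm_act f (0 : cm_car M) = 0.
Proof.
have H := cm_act_linr f 1 (0 : cm_car M) 0.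
rewrite scale1r addr0 scale1r in H.
rewrite -{1}[cm_act f 0]addr0 in H.
have H2 := addrI _ H. by rewrite -H2.
Qed.

Definition fixE (x : Ob E) : {pred cm_car M} := fun m => cm_act (idm x) m == m.

Lemma fixE_closed x : GRing.submod_closed (fixE x).
Proof.
split; first by rewrite unfold_in /fixE cm_act0r.
move=> a u v; rewrite !unfold_in /fixE => /eqP hu /eqP hv.
by rewrite cm_act_linr hu hv.
Qed.

HB.instance Definition _ x := GRing.isSubmodClosed.Build k (cm_car M) (fixE x) (fixE_closed x).

Definition Ups_car x := {m : cm_car M | m \in fixE x}.
HB.instance Definition _ x := [isSub of Ups_car x for @sval _ _].
HB.instance Definition _ x := [Choice of Ups_car x by <:].
HB.instance Definition _ x := [SubChoice_isSubLmodule of Ups_car x by <:].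

Lemma Ups_act_in x y (f : Hom E x y) (v : Ups_car x) : cm_act f (val v) \in fixE y.
Proof. by rewrite unfold_in /fixE cm_coassoc comp1l. Qed.

Definition Ups_act x y (f : Hom E x y) (v : Ups_car x) : Ups_car y :=
  exist _ (cm_act f (val v)) (Ups_act_in f v).

Lemma Ups_linl x y (a : k) (f g : Hom E x y) (v : Ups_car x) :
  Ups_act (a *: f + g) v = a *: Ups_act f v + Ups_act g v.
Proof. by apply: val_inj; rewrite /= cm_act_linl. Qed.

Lemma Ups_linr x y (f : Hom E x y) (a : k) (v w : Ups_car x) :
  Ups_act f (a *: v + w) = a *: Ups_act f v + Ups_act f w.
Proof. by apply: val_inj; rewrite /= cm_act_linr. Qed.

Lemma Ups_id x (v : Ups_car x) : Ups_act (idm x) v = v.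
Proof. by apply: val_inj; rewrite /=; apply/eqP; have := valP v; rewrite unfold_in. Qed.

Lemma Ups_comp x y z (f : Hom E x y) (g : Hom E y z) (v : Ups_car x) :
  Ups_act (comp g f) v = Ups_act g (Ups_act f v).
Proof. by apply: val_inj; rewrite /= cm_coassoc. Qed.

Definition Ups : Emodule E := Emod Ups_linl Ups_linr Ups_id Ups_comp.
End UM.
Arguments fixE : clear implicits.
Arguments fixE M x.
Arguments Ups_car : clear implicits.
Arguments Ups_car M x.
Arguments Ups : clear implicits.
Arguments Ups M.

Lemma Ups_mor_in (M N : comodule E) (t : {linear cm_car M -> cm_car N})
  (Ht : comod_mor t) x (v : Ups_car M x) : t (val v) \in fixE N x.
Proof.
rewrite unfold_in /fixE -Ht; apply/eqP; congr (t _).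
by apply/eqP; have := valP v; rewrite unfold_in.
Qed.

Definition Ups_mor (M N : comodule E) (t : {linear cm_car M -> cm_car N})
  (Ht : comod_mor t) x (v : Ups_car M x) : Ups_car N x :=
  exist _ (t (val v)) (Ups_mor_in Ht v).

End U.
Arguments Ups_mor {k E M N t} Ht x v.

(** [Ups M x] is the summand [e_x . M] of [M = (+)_x e_x . M], and
    comodule morphisms commute with the idempotents [e_x].  Exactness is then
    checked summand by summand, and a morphism is determined by its restrictions
    to the summands.  For fullness, a natural transformation [eta] is glued to
    [t m := \sum_x eta_x (e_x . m)], a finite sum by the counit axiom; [t]
    commutes with [ev_f] because [eta] does and [ev_f . m] lies in [e_y . M]
    for [f : x -> y]. *)

From HB Require Import structures.
From Stdlib Require Import Classical ClassicalEpsilon.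
From Stdlib Require List.
From mathcomp Require Import all_boot all_algebra.
Set Implicit Arguments. Unset Strict Implicit. Unset Printing Implicit Defensive.
Import GRing.Theory.
Local Open Scope ring_scope.

Section ComoduleComponents.
Variables (k : fieldType) (E : linCat k) (M : comodule E).

Lemma cm_actD x y (f : Hom E x y) (m n : cm_car M) :
  cm_act f (m + n) = cm_act f m + cm_act f n.
Proof. by have := cm_act_linr f 1 m n; rewrite !scale1r. Qed.

Lemma cm_actZ x y (f : Hom E x y) a (m : cm_car M) :
  cm_act f (a *: m) = a *: cm_act f m.
Proof. by have := cm_act_linr f a m 0; rewrite !addr0 cm_act0r addr0. Qed.

Lemma cm_actB x y (f : Hom E x y) (m n : cm_car M) :
  cm_act f (m - n) = cm_act f m - cm_act f n.
Proof. by rewrite cm_actD -scaleN1r cm_actZ scaleN1r. Qed.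

Lemma cm_act_idm_Ups x (v : Ups_car M x) : cm_act (idm x) (val v) = val v.
Proof. by apply/eqP; have := valP v; rewrite unfold_in. Qed.

Lemma cm_act_idm_Ups_neq x y (v : Ups_car M x) :
  x <> y -> cm_act (idm y) (val v) = 0.
Proof. by move=> neq_xy; rewrite -cm_act_idm_Ups; apply: cm_coassoc0. Qed.

Lemma cm_act_idm_in x (m : cm_car M) : cm_act (idm x) m \in @fixE _ _ M x.
Proof. by rewrite unfold_in /fixE cm_coassoc comp1l. Qed.

Definition Ups_proj x (m : cm_car M) : Ups_car M x :=
  exist _ (cm_act (idm x) m) (cm_act_idm_in x m).

Lemma Ups_projD x (m n : cm_car M) :
  Ups_proj x (m + n) = Ups_proj x m + Ups_proj x n.
Proof. by apply: val_inj; rewrite /= cm_actD. Qed.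

Lemma Ups_projZ x a (m : cm_car M) : Ups_proj x (a *: m) = a *: Ups_proj x m.
Proof. by apply: val_inj; rewrite /= cm_actZ. Qed.

Lemma Ups_proj_val x (v : Ups_car M x) : Ups_proj x (val v) = v.
Proof. by apply: val_inj; rewrite /= cm_act_idm_Ups. Qed.

Lemma Ups_proj_act x y (f : Hom E x y) (m : cm_car M) :
  Ups_proj y (cm_act f m) = Ups_act f (Ups_proj x m).
Proof. by apply: val_inj; rewrite /= !cm_coassoc comp1l comp1r. Qed.

Lemma Ups_proj_act_neq x y z (f : Hom E x y) (m : cm_car M) :
  y <> z -> Ups_proj z (cm_act f m) = 0.
Proof. by move=> neq_yz; apply: val_inj; rewrite /= cm_coassoc0. Qed.

Lemma cm_eq_components (m n : cm_car M) :
  (forall x, cm_act (idm x) m = cm_act (idm x) n) -> m = n.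
Proof.
move=> eq_mn; apply/eqP; rewrite -subr_eq0; apply/eqP.
have [s [_ _ ->]] := cm_counit (m - n).
by apply: big1 => z _; rewrite cm_actB eq_mn subrr.
Qed.

Lemma cm_act_idm_sum_notin (g : forall x, Ups_car M x) s y :
  ~ List.In y s -> cm_act (idm y) (\sum_(x <- s) val (g x)) = 0.
Proof.
elim: s => [|x s IHs] /= y_notin; first by rewrite big_nil cm_act0r.
rewrite big_cons cm_actD cm_act_idm_Ups_neq ?IHs ?addr0 //; tauto.
Qed.

Lemma cm_act_idm_sum_in (g : forall x, Ups_car M x) s y :
  List.NoDup s -> List.In y s -> cm_act (idm y) (\sum_(x <- s) val (g x)) = val (g y).
Proof.
move=> uniq_s y_in; have [s1 [s2 def_s]] := List.in_split _ _ y_in; subst s.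
have := List.NoDup_remove_2 _ _ _ uniq_s; rewrite List.in_app_iff => y_notin.
rewrite big_cat big_cons !cm_actD !cm_act_idm_sum_notin; try tauto.
by rewrite cm_act_idm_Ups add0r addr0.
Qed.

End ComoduleComponents.

Section ExactFaithful.
Variables (k : fieldType) (E : linCat k).

Lemma Ups_exact (M1 M2 M3 : comodule E)
    (a : {linear cm_car M1 -> cm_car M2}) (b : {linear cm_car M2 -> cm_car M3})
    (Ha : comod_mor a) (Hb : comod_mor b) :
    (forall m2 : cm_car M2, (exists m1, a m1 = m2) <-> b m2 = 0) ->
  forall x (v : Ups_car M2 x),
    (exists u : Ups_car M1 x, Ups_mor Ha x u = v) <-> Ups_mor Hb x v = 0.
Proof.
move=> exact_ab x v; split.
  case=> u <-; apply: val_inj => /=.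
  by apply/(exact_ab (a (val u))); exists (val u).
move=> /(congr1 val) /= /(exact_ab (val v)) [m1 def_v].
exists (Ups_proj x m1); apply: val_inj => /=.
by rewrite Ha def_v cm_act_idm_Ups.
Qed.

Lemma Ups_faithful (M N : comodule E) (t t' : {linear cm_car M -> cm_car N})
    (Ht : comod_mor t) (Ht' : comod_mor t') :
    (forall x (v : Ups_car M x), Ups_mor Ht x v = Ups_mor Ht' x v) ->
  forall m, t m = t' m.
Proof.
move=> eq_tt' m; apply: cm_eq_components => x.
by rewrite -Ht -Ht'; apply: (congr1 val (eq_tt' x (Ups_proj x m))).
Qed.

End ExactFaithful.

Section Fullness.
Variables (k : fieldType) (E : linCat k) (M N : comodule E).
Variable eta : forall x : Ob E, md_car (Ups M) x -> md_car (Ups N) x.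
Arguments eta : clear implicits.
Hypothesis eta_nat : is_nat eta.

Lemma eta0 x : eta x 0 = 0.
Proof.
have := (proj1 eta_nat) x 1 0 0; rewrite scale1r addr0 scale1r.
by rewrite -{1}[eta x 0]addr0 => /addrI <-.
Qed.

Lemma glue_nat_exists (m : cm_car M) :
  exists n : cm_car N, forall y, cm_act (idm y) n = val (eta y (Ups_proj y m)).
Proof.
have [s [uniq_s m_out _]] := cm_counit m.
exists (\sum_(x <- s) val (eta x (Ups_proj x m))) => y.
have [y_in | y_notin] := classic (List.In y s).
  exact: (cm_act_idm_sum_in (fun x => eta x (Ups_proj x m))).
have -> : Ups_proj y m = 0 by apply: val_inj; rewrite /= m_out.
by rewrite eta0 (cm_act_idm_sum_notin (fun x => eta x (Ups_proj x m))).
Qed.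

Definition glue_nat (m : cm_car M) : cm_car N :=
  proj1_sig (constructive_indefinite_description _ (glue_nat_exists m)).

Lemma glue_natP m y : cm_act (idm y) (glue_nat m) = val (eta y (Ups_proj y m)).
Proof. by rewrite /glue_nat; case: constructive_indefinite_description. Qed.

Lemma glue_nat_linear : linear glue_nat.
Proof.
move=> a u v; apply: cm_eq_components => y.
by rewrite cm_actD cm_actZ !glue_natP Ups_projD Ups_projZ (proj1 eta_nat).
Qed.

HB.instance Definition _ :=
  GRing.isLinear.Build k (cm_car M) (cm_car N) _ glue_nat glue_nat_linear.

Lemma glue_nat_mor : comod_mor glue_nat.
Proof.
move=> x y f m; apply: cm_eq_components => z; rewrite glue_natP.
have [<- | neq_yz] := classic (y = z).
  rewrite cm_coassoc comp1l -[in RHS](comp1r f) -cm_coassoc glue_natP.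
  by rewrite Ups_proj_act (proj2 eta_nat).
by rewrite Ups_proj_act_neq // eta0 cm_coassoc0.
Qed.

Lemma Ups_mor_glue_nat x (v : Ups_car M x) : Ups_mor glue_nat_mor x v = eta x v.
Proof.
apply: val_inj => /=.
by rewrite -(cm_act_idm_Ups v) glue_nat_mor glue_natP Ups_proj_val.
Qed.

End Fullness.

Lemma Ups_full (k : fieldType) (E : linCat k) (M N : comodule E)
    (eta : forall x : Ob E, md_car (Ups M) x -> md_car (Ups N) x) :
    is_nat eta ->
  exists (t : {linear cm_car M -> cm_car N}) (Ht : comod_mor t),
    forall x (v : Ups_car M x), Ups_mor Ht x v = eta x v.
Proof.
by move=> eta_nat; exists (glue_nat eta_nat), (glue_nat_mor eta_nat);
  apply: Ups_mor_glue_nat.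
Qed.

Theorem proposition2p5 (k : fieldType) (E : linCat k) (HE : locally_finite E) :
  (* exact: Upsilon_E sends exact sequences M1 -a-> M2 -b-> M3 of comodules
     to exact sequences of E-modules (exactness checked at every object x) *)
  (forall (M1 M2 M3 : comodule E)
          (a : {linear cm_car M1 -> cm_car M2}) (b : {linear cm_car M2 -> cm_car M3})
          (Ha : comod_mor a) (Hb : comod_mor b),
      (forall m2 : cm_car M2, (exists m1, a m1 = m2) <-> b m2 = 0) ->
      forall (x : Ob E) (v : Ups_car M2 x),
        (exists u : Ups_car M1 x, Ups_mor Ha x u = v) <-> Ups_mor Hb x v = 0)
  /\
  (* faithful *)
  (forall (M N : comodule E) (t t' : {linear cm_car M -> cm_car N})
          (Ht : comod_mor t) (Ht' : comod_mor t'),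
      (forall (x : Ob E) (v : Ups_car M x), Ups_mor Ht x v = Ups_mor Ht' x v) ->
      forall m : cm_car M, t m = t' m)
  /\
  (* full *)
  (forall (M N : comodule E)
          (eta : forall x : Ob E, md_car (Ups M) x -> md_car (Ups N) x),
      is_nat eta ->
      exists (t : {linear cm_car M -> cm_car N}) (Ht : comod_mor t),
        forall (x : Ob E) (v : Ups_car M x), Ups_mor Ht x v = eta x v).
Proof.
split; [exact: Ups_exact | split; [exact: Ups_faithful | exact: Ups_full]].
Qed.
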